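(* Fix $C<e^{-1}$ and $\theta>0$. There are positive constants $M$ and $L_2$ such that \[ \mathbb{P}\Big(\bigcap_{1\le j\le n}\{\#\mathcal{E}_j\le M\log n\}\Big)\ \ge\ 1-\frac{1}{n^{\theta}} \] for all $n\ge L_2$.
   Context: Let $C>0$ be a constant and $(\alpha_n)_{n\ge1}$ a sequence of nonnegative reals with $\alpha_n\to0$. For each $n$, consider the complete graph $K_n$ on vertex set $\{1,\dots,n\}$; each edge $e$ of $K_n$ is independently open with probability $p_n(e)$ and closed otherwise, where $\frac{C-\alpha_n}{n}\le p_n(e)\le\frac{C+\alpha_n}{n}$ for every edge $e$. Let $G$ be the resulting random graph of open edges, with probability measure $\mathbb{P}$. For a vertex $i$, $\mathcal{E}_i$ denotes the open component of $G$ containing $i$ (the set of vertices joined to $i$ by a path of open edges, together with $i$ itself), and $\#\mathcal{E}_i$ its number of vertices. $\log$ is the natural logarithm. *)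

From HB Require Import structures.
From mathcomp Require Import all_boot all_order all_algebra.
From mathcomp Require Import all_classical all_reals all_analysis.
Set Implicit Arguments. Unset Strict Implicit. Unset Printing Implicit Defensive.
Import Order.TTheory GRing.Theory Num.Theory.
Local Open Scope ring_scope.

(* Edges of the complete graph K_n on vertex set 'I_n (= {1..n} shifted):
   unordered pairs of distinct vertices, i.e. 2-element subsets. *)
Definition Kedges (n : nat) : {set {set 'I_n}} := [set e : {set 'I_n} | #|e| == 2%N].

Definition is_config (n : nat) (G : {set {set 'I_n}}) : bool := G \subset Kedges n.

Definition config_prob (R : realType) (n : nat) (p : {set 'I_n} -> R)
    (G : {set {set 'I_n}}) : R :=
  \prod_(e in Kedges n) (if e \in G then p e else 1 - p e).

Definition Prob (R : realType) (n : nat) (p : {set 'I_n} -> R)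
    (A : {set {set 'I_n}} -> bool) : R :=
  \sum_(G : {set {set 'I_n}} | is_config G && A G) config_prob p G.

Definition open_adj (n : nat) (G : {set {set 'I_n}}) : rel 'I_n :=
  fun i j => [set i; j] \in G.

Definition open_cluster (n : nat) (G : {set {set 'I_n}}) (i : 'I_n) : {set 'I_n} :=
  [set j | connect (open_adj G) i j].

From HB Require Import structures.
From mathcomp Require Import all_boot all_order all_algebra.
From mathcomp Require Import all_classical all_reals all_analysis.
From mathcomp Require Import ring lra.
Import Order.TTheory GRing.Theory Num.Theory numFieldNormedType.Exports.
Local Open Scope ring_scope.
Set Implicit Arguments. Unset Strict Implicit.

(* If some open cluster has more than m vertices, it contains m open edges
   forming a tree rooted at one of its vertices.  Such trees are coded by a
   root j, a vertex set S of size m + 1 and a parent map on S :\ j: there are at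
   most n 'C(n - 1, m) (m + 1)^m codes, and for C < c < 1/e and n large the m
   edges of a code are all open with probability at most (c/n)^m.  As
   'C(n - 1, m) m! <= n^m and (m + 1)^m <= m! e^m, the union bound gives
   n (e c)^m, which is at most n^-theta for m = floor(M log n) with
   M = (theta + 2) / -log (e c). *)

Section Probability.
Variables (R : realType) (n : nat) (p : {set 'I_n} -> R).

Lemma Prob_all_open (F : {set {set 'I_n}}) : F \subset Kedges n ->
  Prob p (fun G => F \subset G) = \prod_(e in F) p e.
Proof.
move=> FK.
pose weight (e : {set 'I_n}) (open : bool) : R :=
  if e \in Kedges n then (if e \in F then (if open then p e else 0)
                          else (if open then p e else 1 - p e))
  else (if open then 0 else 1).
have prod_weight : \prod_(e in F) p e = \prod_e (weight e true + weight e false).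
  rewrite [RHS](bigID (fun e => e \in F)) /= [X in _ * X]big1 ?mulr1.
    by apply: eq_bigr => e eF; rewrite /weight eF (fintype.subsetP FK _ eF) addr0.
  move=> e eF; rewrite /weight (negbTE eF); case: (e \in Kedges n).
    by rewrite addrC subrK.
  by rewrite add0r.
(* Expanding the product of the total weights of all edges gives one term per
   set G of edges: config_prob p G if F \subset G \subset Kedges n, else 0. *)
rewrite prod_weight bigA_distr /Prob [LHS]big_mkcond /=; symmetry.
apply: eq_bigr => G _.
case: ifP => [/andP[GK FG]|].
  rewrite /config_prob (bigID (fun e => e \in Kedges n)) /= [X in _ * X]big1 ?mulr1.
    apply: eq_bigr => e eK; rewrite /weight eK; case eG: (e \in G); case eF: (e \in F) => //.
    by rewrite (fintype.subsetP FG _ eF) in eG.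
  move=> e eK; rewrite /weight (negbTE eK); case: ifP => // eG.
  by move: eK; rewrite (fintype.subsetP GK _ eG).
move/negbT; rewrite negb_and => /orP[/fintype.subsetPn[e eG eK]|/fintype.subsetPn[e eF eG]].
  by rewrite (bigD1 e) //= /weight (negbTE eK) eG mul0r.
by rewrite (bigD1 e) //= /weight (fintype.subsetP FK _ eF) eF (negbTE eG) mul0r.
Qed.

Lemma Prob_true : Prob p (fun _ => true) = 1.
Proof.
have := Prob_all_open (finset.sub0set (Kedges n)); rewrite big_set0 => <-.
by apply: eq_bigl => G; rewrite finset.sub0set.
Qed.

Lemma Prob_complement (A : pred {set {set 'I_n}}) :
  Prob p A = 1 - Prob p (fun G => ~~ A G).
Proof.
have andbT_sum (P : pred {set {set 'I_n}}) :
    \sum_(G | is_config G && true && P G) config_prob p G = Prob p P.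
  by apply: eq_bigl => G; rewrite andbT.
by rewrite -Prob_true /Prob [X in X - _](bigID A) /= !andbT_sum addrK.
Qed.

Hypothesis p01 : forall e, e \in Kedges n -> 0 <= p e <= 1.

Lemma config_prob_ge0 G : 0 <= config_prob p G.
Proof.
apply: prodr_ge0 => e /p01 /andP[p0 p1].
by case: ifP => _ //; rewrite subr_ge0.
Qed.

Lemma le_Prob (A B : pred {set {set 'I_n}}) :
  (forall G, is_config G -> A G -> B G) -> Prob p A <= Prob p B.
Proof.
move=> AB; rewrite /Prob [leRHS](bigID A) /=.
rewrite (eq_bigl (fun G => is_config G && B G && A G)); last first.
  move=> G; case: (boolP (is_config G)) => //= cG.
  by case: (boolP (A G)) => [/(AB _ cG) ->|]; rewrite ?andbF.
by rewrite lerDl sumr_ge0 // => G _; apply: config_prob_ge0.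
Qed.

Lemma Prob_le_sum (I : finType) (P : pred I) (B : I -> pred {set {set 'I_n}})
    (A : pred {set {set 'I_n}}) :
  (forall G, is_config G -> A G -> exists2 i, P i & B i G) ->
  Prob p A <= \sum_(i | P i) Prob p (B i).
Proof.
move=> hA.
rewrite /Prob (exchange_big_dep (fun G => is_config G)) /=; last by move=> i G _ /andP[].
apply: (@le_trans _ _ (\sum_(G | is_config G && A G)
          \sum_(i | P i && (is_config G && B i G)) config_prob p G)).
  apply: ler_sum => G /andP[cG aG]; have [i Pi Bi] := hA G cG aG.
  rewrite (bigD1 i) /=; last by rewrite Pi cG Bi.
  by rewrite lerDl sumr_ge0 // => j _; apply: config_prob_ge0.
rewrite [leRHS](bigID A) /= lerDl sumr_ge0 // => G _.
by rewrite sumr_ge0 // => j _; apply: config_prob_ge0.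
Qed.

End Probability.

Section ParentCodes.
Variable n : nat.
Implicit Types (j u w : 'I_n) (S : {set 'I_n}) (f : {ffun 'I_n -> 'I_n})
  (G : {set {set 'I_n}}).

Lemma open_adj_sym G : symmetric (open_adj G).
Proof. by move=> i j; rewrite /open_adj finset.setUC. Qed.

Lemma open_cluster_exit G j S : j \in S -> ~~ (open_cluster G j \subset S) ->
  exists u w, [/\ u \in S, w \notin S & open_adj G u w].
Proof.
move=> jS; apply: contraNP => no_exit.
have S_closed : fingraph.closed (open_adj G) (mem S).
  apply: intro_closed; first exact/sym_connect_sym/open_adj_sym.
  by move=> u w uw uS; apply/negPn/negP => wS; apply: no_exit; exists u, w.
apply/fintype.subsetP => w; rewrite inE => jw.
by rewrite -(closed_connect S_closed jw).
Qed.

Definition parent_edges j S f : {set {set 'I_n}} := [set [set v; f v] | v in S :\ j].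

(* The parent map f is extended by j outside S :\ j, so that the codes of a
   given (j, S) form the finite set pffun_on j (S :\ j) S; acyclicity is not
   recorded, only that the edges {v, f v} are m distinct edges of K_n. *)
Definition parent_code m j S f : bool :=
  [&& j \in S, #|S| == m.+1, f \in pffun_on j (S :\ j) S,
      #|parent_edges j S f| == m & parent_edges j S f \subset Kedges n].

Definition graft f w u : {ffun 'I_n -> 'I_n} :=
  [ffun x => if x == w then u else f x].

Lemma parent_code_set1 j : parent_code 0 j [set j] [ffun => j].
Proof.
rewrite /parent_code /parent_edges finset.setDv imset0 set11 cards1 cards0.
rewrite finset.sub0set andbT /= eqxx andbT; apply/pffun_onP; split.
  by apply/fintype.subsetP => x; rewrite inE ffunE eqxx.
by move=> y /mapP[x]; rewrite mem_enum inE.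
Qed.

Lemma parent_edges_graft j S f u w : j \in S -> w \notin S ->
  parent_edges j (w |: S) (graft f w u) = [set w; u] |: parent_edges j S f.
Proof.
move=> jS wS; have wj : w != j by apply: contraNneq wS => ->.
rewrite /parent_edges.
have -> : (w |: S) :\ j = w |: (S :\ j).
  by apply/finset.setP => x; rewrite !inE; case: (eqVneq x w) => [->|]; rewrite ?wj.
rewrite imsetU1 ffunE eqxx; congr (_ |: _).
apply: eq_in_imset => v; rewrite in_setD1 => /andP[_ vS].
by rewrite ffunE; case: eqVneq vS => [->|]; first by rewrite (negbTE wS).
Qed.

Lemma parent_code_graft m j S f u w : parent_code m j S f -> u \in S -> w \notin S ->
  parent_code m.+1 j (w |: S) (graft f w u).
Proof.
case/and5P => jS /eqP cS /pffun_onP[f_supp f_val] /eqP cE EK uS wS.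
have wj : w != j by apply: contraNneq wS => ->.
have wu : w != u by apply: contraNneq wS => ->.
have f_in x : x \in S :\ j -> f x \in S by move=> xS; apply: f_val; exact: fintype.image_f.
have new_edge : [set w; u] \notin parent_edges j S f.
  apply/negP => /imsetP[v vSj /finset.setP/(_ w)]; rewrite !inE eqxx /=.
  have := f_in v vSj; rewrite in_setD1 in vSj; case/andP: vSj => _ vS fvS.
  by case/esym/orP => /eqP wv; rewrite wv ?fvS ?vS in wS.
rewrite /parent_code parent_edges_graft // in_setU1 jS orbT cardsU1 wS cS /=.
have wuK : [set w; u] \in Kedges n by rewrite inE finset.cards2 wu.
rewrite cardsU1 new_edge cE eqxx finset.subUset EK finset.sub1set wuK add1n eqxx !andbT /=.
apply/pffun_onP; split.
  apply/fintype.subsetP => x; rewrite !inE ffunE.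
  case: (eqVneq x w) => [->|_ fx]; first by rewrite wj.
  by have := fintype.subsetP f_supp x; rewrite !inE fx /= => /(_ isT).
move=> y /mapP[x]; rewrite mem_enum !inE ffunE => /andP[xj].
case: (eqVneq x w) => [_ _ ->|_ xS ->]; first by rewrite uS orbT.
by rewrite f_in ?orbT // in_setD1 xj.
Qed.

Lemma open_cluster_parent_code G j m : (m < #|open_cluster G j|)%N ->
  exists S f, parent_code m j S f && (parent_edges j S f \subset G).
Proof.
elim: m => [|m IH] hm.
  exists [set j], [ffun => j]; rewrite parent_code_set1 /parent_edges.
  by rewrite finset.setDv imset0 finset.sub0set.
have [S [f /andP[code EG]]] := IH (ltnW hm).
have /and5P[jS /eqP cS _ _ _] := code.
have [|u [w [uS wS uw]]] := @open_cluster_exit G j S jS.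
  by apply/negP => /subset_leq_card; rewrite cS leqNgt hm.
exists (w |: S), (graft f w u).
rewrite parent_code_graft // parent_edges_graft //.
by rewrite finset.subUset EG andbT finset.sub1set; rewrite open_adj_sym in uw.
Qed.

End ParentCodes.

Lemma cardsD1_succ (T : finType) (A : {set T}) x m :
  x \in A -> #|A| = m.+1 -> #|A :\ x| = m.
Proof. by move=> xA; rewrite (cardsD1 x) xA add1n => -[]. Qed.

Section Counting.
Variable n : nat.
Local Open Scope nat_scope.

Lemma card_rooted_sets (j : 'I_n) m :
  #|[set S : {set 'I_n} | (j \in S) && (#|S| == m.+1)]| <= 'C(n.-1, m).
Proof.
rewrite -(card_in_imset (f := fun S => S :\ j)); last first.
  move=> S S'; rewrite !inE => /andP[jS _] /andP[jS' _] /= e.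
  by rewrite -(finset.setD1K jS) -(finset.setD1K jS') e.
have -> : n.-1 = #|[set~ j]| by rewrite cardsC1 card_ord.
rewrite -cards_draws; apply: subset_leq_card.
apply/fintype.subsetP => T /imsetP[S]; rewrite !inE => /andP[jS /eqP cS] ->.
rewrite (cardsD1_succ jS cS) eqxx andbT.
by apply/fintype.subsetP => x; rewrite in_setD1 in_setC1 => /andP[].
Qed.

Lemma card_parent_codes m :
  #|[set x : 'I_n * {set 'I_n} * {ffun 'I_n -> 'I_n} | parent_code m x.1.1 x.1.2 x.2]|
    <= n * 'C(n.-1, m) * m.+1 ^ m.
Proof.
rewrite -sum1_card big_mkcond /=; under eq_bigr do rewrite inE.
rewrite -(pair_bigA _ (fun jS f => if parent_code m jS.1 jS.2 f then 1 else 0)) /=.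
rewrite -(pair_bigA _ (fun j S => \sum_f if parent_code m j S f then 1 else 0)) /=.
apply: (@leq_trans (\sum_(j < n) 'C(n.-1, m) * m.+1 ^ m)); last first.
  by rewrite sum_nat_const card_ord mulnA.
apply: leq_sum => j _.
apply: (@leq_trans (\sum_(S in [set S : {set 'I_n} | (j \in S) && (#|S| == m.+1)]) m.+1 ^ m)); last first.
  by rewrite sum_nat_const leq_mul2r card_rooted_sets orbT.
rewrite [leqRHS]big_mkcond; apply: leq_sum => S _; rewrite inE.
case: (boolP ((j \in S) && (#|S| == m.+1))) => [/andP[jS /eqP cS]|Sbad]; last first.
  by rewrite big1 // => f _; case: ifP => // /and3P[jS cS _]; rewrite jS cS in Sbad.
apply: (@leq_trans (\sum_(f in pffun_on j (S :\ j) S) 1)).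
  by rewrite [leqRHS]big_mkcond; apply: leq_sum => f _; case: ifP => // /and5P[_ _ -> _ _].
by rewrite sum1_card card_pffun_on cS (cardsD1_succ jS cS).
Qed.

End Counting.

Lemma bin_pred_fact_le n m : ('C(n.-1, m) * m`! <= n ^ m)%N.
Proof.
rewrite bin_ffact ffact_prod -[m in (_ <= _ ^ m)%N]card_ord -prod_nat_const.
by apply: leq_prod => i _; apply: leq_trans (leq_subr _ _) (leq_pred _).
Qed.

Section Estimates.
Variable R : realType.

Lemma natrS_expr_le k : k.+1%:R ^+ k <= expR 1 * k%:R ^+ k :> R.
Proof.
case: k => [|k]; first by rewrite !expr0 mulr1 ltW // expR_gt1.
have k0 : 0 < k.+1%:R :> R by rewrite ltr0n.
have -> : k.+2%:R = k.+1%:R * (1 + k.+1%:R^-1) :> R.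
  by rewrite mulrDr mulr1 mulfV ?gt_eqF // -natr1.
rewrite exprMn mulrC ler_pM2r ?exprn_gt0 //.
have -> : expR 1 = expR (k.+1%:R^-1) ^+ k.+1 :> R by rewrite -expRM_natl mulfV ?gt_eqF.
apply: lerXn2r; last exact: expR_ge1Dx.
all: by rewrite nnegrE ?expR_ge0 // addr_ge0 // invr_ge0 ltW.
Qed.

Lemma natrS_expr_le_fact m : m.+1%:R ^+ m <= m`!%:R * expR 1 ^+ m :> R.
Proof.
elim: m => [|m IH]; first by rewrite !expr0 fact0 mulr1.
apply: le_trans (natrS_expr_le m.+1) _.
have -> : m.+1`!%:R * expR 1 ^+ m.+1 = expR 1 * m.+1%:R * (m`!%:R * expR 1 ^+ m) :> R.
  by rewrite factS natrM exprS; ring.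
by rewrite exprS mulrA ler_wpM2l // mulr_ge0 ?expR_ge0.
Qed.

Lemma parent_code_weight_le n m (c : R) : (0 < n)%N -> 0 <= c ->
  (n * 'C(n.-1, m) * m.+1 ^ m)%:R * (c / n%:R) ^+ m <= n%:R * (expR 1 * c) ^+ m.
Proof.
move=> n0 c0; have np : 0 < n%:R :> R by rewrite ltr0n.
have count_le : 'C(n.-1, m)%:R * m.+1%:R ^+ m <= n%:R ^+ m * expR 1 ^+ m :> R.
  apply: le_trans (ler_wpM2l (ler0n _ _) (natrS_expr_le_fact m)) _.
  rewrite mulrA -natrM -natrX ler_wpM2r ?exprn_ge0 ?expR_ge0 //.
  by rewrite ler_nat bin_pred_fact_le.
rewrite !natrM natrX expr_div_n exprMn.
set C := 'C(n.-1, m)%:R in count_le *; set X := m.+1%:R ^+ m in count_le *.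
have -> : n%:R * C * X * (c ^+ m / n%:R ^+ m) = n%:R * (C * X / n%:R ^+ m * c ^+ m).
  by rewrite mulrA; ring.
apply: ler_wpM2l => //; apply: ler_wpM2r; first exact: exprn_ge0.
by rewrite ler_pdivrMr ?exprn_gt0 // [leRHS]mulrC.
Qed.

End Estimates.

Lemma Prob_large_cluster_le (R : realType) n (p : {set 'I_n} -> R) (c : R) m :
  (0 < n)%N -> 0 <= c ->
  (forall e, e \in Kedges n -> 0 <= p e <= 1) ->
  (forall e, e \in Kedges n -> p e <= c / n%:R) ->
  Prob p (fun G => [exists j, m < #|open_cluster G j|]%N) <= n%:R * (expR 1 * c) ^+ m.
Proof.
move=> n0 c0 p01 p_le.
pose code (x : 'I_n * {set 'I_n} * {ffun 'I_n -> 'I_n}) := parent_code m x.1.1 x.1.2 x.2.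
apply: le_trans (Prob_le_sum p01 (P := code)
  (B := fun x G => parent_edges x.1.1 x.1.2 x.2 \subset G) _) _.
  move=> G _ /existsP[j /open_cluster_parent_code[S [f /andP[Sf EG]]]].
  by exists (j, S, f).
apply: le_trans (_ : \sum_(x | code x) (c / n%:R) ^+ m <= _).
  apply: ler_sum => -[[j S] f] /and5P[_ _ _ /eqP cE EK].
  rewrite Prob_all_open // -[in leRHS]cE -prodr_const; apply: ler_prod => e eE.
  have eK := fintype.subsetP EK e eE.
  by have /andP[-> _] := p01 e eK; rewrite p_le.
rewrite (eq_bigl (fun x => x \in [set x | code x])); last by move=> x; rewrite inE.
rewrite sumr_const -[leLHS]mulr_natl; apply: le_trans _ (parent_code_weight_le m n0 c0).
by rewrite ler_wpM2r ?exprn_ge0 ?divr_ge0 // ler_nat card_parent_codes.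
Qed.

Lemma natr_mul_expr_truncn_le (R : realType) (r theta : R) (n : nat) :
  0 < r < 1 -> 0 < theta -> r^-1 <= n%:R ->
  n%:R * r ^+ Num.truncn ((theta + 2) / - ln r * ln (n%:R : R)) <= (n%:R `^ theta)^-1.
Proof.
case/andP=> r0 r1 theta0 rn.
have lnr : ln r < 0 by rewrite ln_lt0 // r0.
have n0 : 0 < n%:R :> R by apply: lt_le_trans rn; rewrite invr_gt0.
set L := ln (n%:R : R); set x := (theta + 2) / - ln r * L; set m := Num.truncn x.
have x_lt : x < m.+1%:R := truncnS_gt x.
have lnr_L : - ln r <= L by rewrite -lnV ?posrE // ler_ln ?posrE ?invr_gt0.
have xlnr : x * ln r = - (theta + 2) * L.
  by rewrite /x; field; rewrite lt_eqF.
have nE : n%:R = expR L by rewrite lnK ?posrE.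
rewrite {1}nE -[r]lnK ?posrE // -expRM_natl -expRD /powR gt_eqF // -expRN ler_expR -/L.
have : m%:R * ln r <= (x - 1) * ln r.
  apply: ler_wnM2r; first exact: ltW.
  by rewrite lerBlDr natr1 ltW.
rewrite mulrBl xlnr; lra.
Qed.

Lemma Prob_clusters_le_ln (R : realType) n (p : {set 'I_n} -> R) (c theta : R) :
  0 < c -> expR 1 * c < 1 -> 0 < theta -> (expR 1 * c)^-1 <= n%:R ->
  (forall e, e \in Kedges n -> 0 <= p e <= 1) ->
  (forall e, e \in Kedges n -> p e <= c / n%:R) ->
  1 - (n%:R `^ theta)^-1 <= Prob p (fun G => [forall j,
    #|open_cluster G j|%:R <= (theta + 2) / - ln (expR 1 * c) * ln (n%:R : R)]).
Proof.
move=> c0 ec1 theta0 ecn p01 p_le.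
have ec0 : 0 < expR 1 * c by rewrite mulr_gt0 ?expR_gt0.
have ec01 : 0 < expR 1 * c < 1 by rewrite ec0 ec1.
have n1 : 1 <= n%:R :> R by apply: le_trans ecn; rewrite invf_ge1 // ltW.
have n0 : (0 < n)%N by rewrite -(ler_nat R).
set x := _ * ln _.
have lnec : ln (expR 1 * c) < 0 by rewrite ln_lt0 // ec0.
have x0 : 0 <= x by rewrite mulr_ge0 ?ln_ge0 // divr_ge0 ?oppr_ge0 ?(ltW lnec) //; lra.
rewrite Prob_complement lerD2l lerN2.
apply: le_trans (natr_mul_expr_truncn_le ec01 theta0 ecn).
apply: le_trans (Prob_large_cluster_le _ n0 (ltW c0) p01 p_le).
apply: (le_Prob p01) => G _ /forallPn[j]; rewrite -ltNge => large_j.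
by apply/existsP; exists j; rewrite truncn_lt_nat.
Qed.

Unset Implicit Arguments. Set Strict Implicit.
Local Open Scope classical_set_scope.
Local Open Scope ring_scope.

Theorem theorem2 (R : realType) (C theta : R) (alpha : nat -> R)
  (p : forall n : nat, {set 'I_n} -> R) :
  0 < C -> C < expR (-1) -> 0 < theta ->
  (forall n, 0 <= alpha n) -> alpha n @[n --> \oo] --> 0%R ->
  (forall n (e : {set 'I_n}), e \in Kedges n ->
      [/\ 0 <= p n e, p n e <= 1,
          (C - alpha n) / n%:R <= p n e & p n e <= (C + alpha n) / n%:R]) ->
  exists M : R, exists L2 : R, [/\ 0 < M, 0 < L2 &
    forall n : nat, L2 <= n%:R ->
      Prob (p n) (fun G => [forall j : 'I_n,
                              (#|open_cluster G j|%:R <= M * ln (n%:R : R))])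
      >= 1 - (n%:R `^ theta)^-1].
Proof.
move=> C0 Ce theta0 _ alpha_cvg hp.
pose c := (C + expR (-1)) / 2.
have e0 := expR_gt0 (-1 : R).
have c0 : 0 < c by rewrite /c; lra.
have ec1 : expR 1 * c < 1.
  have : c < (expR 1)^-1 by rewrite -expRN /c; lra.
  by rewrite -(ltr_pM2l (expR_gt0 1)) divff ?gt_eqF ?expR_gt0.
have cC : 0 < c - C by rewrite /c; lra.
have [N _ alpha_le] := cvgr_le _ alpha_cvg _ cC.
exists ((theta + 2) / - ln (expR 1 * c)), (Num.max N%:R (expR 1 * c)^-1); split.
- by rewrite divr_gt0 ?oppr_gt0 ?ln_lt0 ?mulr_gt0 ?expR_gt0 ?ec1 //; lra.
- by rewrite lt_max invr_gt0 mulr_gt0 ?expR_gt0 ?orbT.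
move=> n; rewrite ge_max => /andP[Nn ecn].
apply: Prob_clusters_le_ln => // e /(hp n) [p0 p1 _ p_le]; first by rewrite p0 p1.
apply: le_trans p_le _; rewrite ler_wpM2r ?invr_ge0 //.
by have := alpha_le n; rewrite /= -(ler_nat R) => /(_ Nn); lra.
Qed.
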